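(* Let $\mathcal P$ be a solvable finite-dimensional Poisson $n$-Lie algebra of dimension $m$ over an algebraically closed field of characteristic zero. Then there is a chain of ideals $0=\mathcal P_0\subset\mathcal P_1\subset\cdots\subset\mathcal P_m=\mathcal P$ with $\dim\mathcal P_i=i$ for all $i$.
   Context: A Poisson $n$-Lie algebra is a commutative associative algebra $(\mathcal P,\cdot)$ with an $n$-linear skew-symmetric bracket satisfying the fundamental identity $[x_1,\dots,x_{n-1},[y_1,\dots,y_n]]=\sum_{i=1}^n[y_1,\dots,[x_1,\dots,x_{n-1},y_i],\dots,y_n]$ and the Leibniz rule $[y\cdot z,x_2,\dots,x_n]=y\cdot[z,x_2,\dots,x_n]+z\cdot[y,x_2,\dots,x_n]$. An ideal is a subspace $\mathcal I$ with $\mathcal P\cdot\mathcal I\subseteq\mathcal I$ and $[\mathcal I,\mathcal P,\dots,\mathcal P]\subseteq\mathcal I$. $\mathcal P$ is solvable if $\mathcal P^{(s)}=0$ for some $s$, where $\mathcal P^{(1)}=\mathcal P$, $\mathcal P^{(k+1)}=[\mathcal P^{(k)},\mathcal P^{(k)},\mathcal P,\dots,\mathcal P]+\mathcal P^{(k)}\cdot\mathcal P^{(k)}$ (linear spans). *)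

From HB Require Import structures.
From mathcomp Require Import all_boot all_order all_algebra.
Set Implicit Arguments. Unset Strict Implicit. Unset Printing Implicit Defensive.
Import GRing.Theory.
Local Open Scope ring_scope.


Section PoissonNLie.
Variables (F : fieldType) (V : vectType F) (n : nat).
Variables (mul : V -> V -> V) (brk : {ffun 'I_n -> V} -> V).

Definition upd (x : {ffun 'I_n -> V}) (i : 'I_n) (u : V) : {ffun 'I_n -> V} :=
  [ffun j => if j == i then u else x j].

Definition comm_assoc_algebra : Prop :=
  [/\ forall (a : F) x y z, mul (a *: x + y) z = a *: mul x z + mul y z,
      forall x y, mul x y = mul y x &
      forall x y z, mul x (mul y z) = mul (mul x y) z].

Definition multilinear : Prop :=
  forall (x : {ffun 'I_n -> V}) (i : 'I_n) (a : F) (u v : V),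
    brk (upd x i (a *: u + v)) = a *: brk (upd x i u) + brk (upd x i v).

Definition skew_symmetric : Prop :=
  forall (x : {ffun 'I_n -> V}) (i j : 'I_n), i != j ->
    brk [ffun k => x (if k == i then j else if k == j then i else k)] = - brk x.

(* [x_1,...,x_{n-1},[y_1,...,y_n]] = sum_i [y_1,...,[x_1,...,x_{n-1},y_i],...,y_n];
   the last (index n-1) entry of x is irrelevant (it gets replaced). *)
Definition fundamental_identity : Prop :=
  forall (x y : {ffun 'I_n -> V}) (l : 'I_n), val l = n.-1 ->
    brk (upd x l (brk y)) = \sum_(i < n) brk (upd y i (brk (upd x l (y i)))).

Definition leibniz_rule : Prop :=
  forall (x : {ffun 'I_n -> V}) (i0 : 'I_n), val i0 = 0%N ->
    forall y z, brk (upd x i0 (mul y z)) =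
                mul y (brk (upd x i0 z)) + mul z (brk (upd x i0 y)).

Definition poisson_nlie : Prop :=
  [/\ comm_assoc_algebra, multilinear, skew_symmetric,
      fundamental_identity & leibniz_rule].

Definition is_ideal (I : {vspace V}) : Prop :=
  (forall p u, u \in I -> mul p u \in I) /\
  (forall (x : {ffun 'I_n -> V}) (i0 : 'I_n), val i0 = 0%N ->
     forall u, u \in I -> brk (upd x i0 u) \in I).

Definition is_span (S : V -> Prop) (W : {vspace V}) : Prop :=
  (forall v, S v -> v \in W) /\
  (forall U : {vspace V}, (forall v, S v -> v \in U) -> (W <= U)%VS).

(* generators of P^(k+1) from W = P^(k):
   [a, b, x_3, ..., x_n] with a, b in W, and a.b with a, b in W *)
Definition derived_gens (W : {vspace V}) (v : V) : Prop :=
  (exists x : {ffun 'I_n -> V},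
      (forall i : 'I_n, (val i < 2)%N -> x i \in W) /\ v = brk x) \/
  (exists a b, [/\ a \in W, b \in W & v = mul a b]).

Definition derived_series (D : nat -> {vspace V}) : Prop :=
  D 1%N = fullv /\ forall k, (0 < k)%N -> is_span (derived_gens (D k)) (D k.+1).

Definition solvable_pnlie : Prop :=
  exists D : nat -> {vspace V}, derived_series D /\
    exists s, (0 < s)%N /\ D s = 0%VS.

End PoissonNLie.

(* The operators ad_x = [x_1, ..., x_{n-1}, -] and the multiplications L_p
   span a Lie algebra g of endomorphisms of P, closed under commutators by the
   fundamental identity and the Leibniz rule.  Skew-symmetry moves any argument
   to the last slot, so the g-stable subspaces are ideals, and the commutators
   of g descend along the derived series of P, so g is solvable.  By Lie's
   theorem (algebraically closed field, characteristic 0) the dual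
   representation of g on a g-stable subspace has a common eigenvector, whose
   kernel is a g-stable hyperplane; iterating from P down gives the flag. *)

From HB Require Import structures.
From mathcomp Require Import all_boot all_order all_algebra perm zify.
From Stdlib Require Import Classical ClassicalEpsilon.
Set Implicit Arguments. Unset Strict Implicit. Unset Printing Implicit Defensive.
Import GRing.Theory.
Local Open Scope ring_scope.

Section PredicateSpan.
Variables (K : fieldType) (vT : vectType K).
Implicit Types (P Q : vT -> Prop) (U W : {vspace vT}).

Definition lin_closed P := P 0 /\ forall a x y, P x -> P y -> P (a *: x + y).

Lemma span_ind P (s : seq vT) :
  lin_closed P -> {in s, forall x, P x} -> forall v, v \in <<s>>%VS -> P v.
Proof.
move=> [P0 PD] Ps v /(coord_span (X := in_tuple s)) ->.
apply: (big_ind P) => // [x y Px Py|i _]; first by rewrite -[x]scale1r; apply: PD.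
by rewrite -[_ *: _]addr0; apply: PD => //; apply: Ps; rewrite mem_nth ?size_tuple.
Qed.

Lemma span_cons_dim_gt Q (s : seq vT) :
  ~ (forall v, Q v -> v \in <<s>>%VS) ->
  exists2 v, Q v & (\dim <<s>> < \dim <<v :: s>>)%N.
Proof.
case/not_all_ex_not => v /(imply_to_and (Q v)) [Qv vNs]; exists v => //.
have sub : (<<s>> <= <<v :: s>>)%VS by rewrite span_cons addvSr.
rewrite (ltn_leqif (dimv_leqif_sup sub)); apply/negP => /subvP vs_s.
by apply/vNs/vs_s; rewrite memv_span ?mem_head.
Qed.

Lemma spanning_seq_exists Q : exists2 s : seq vT, {in s, forall x, Q x} &
  forall v, Q v -> v \in <<s>>%VS.
Proof.
suff main k s : (\dim {:vT} - \dim <<s>> < k)%N -> {in s, forall x, Q x} ->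
    exists2 s : seq vT, {in s, forall x, Q x} & forall v, Q v -> v \in <<s>>%VS.
  exact: (main _ [::] (ltnSn _)).
elim: k s => // k IHk s hk sQ.
have [|/span_cons_dim_gt[v Qv lt_s]] := classic (forall v, Q v -> v \in <<s>>%VS).
  by exists s.
apply: (IHk (v :: s)); first by have := dimvS (subvf <<v :: s>>); lia.
by move=> x; rewrite inE => /predU1P[->|/sQ].
Qed.

Lemma is_span_exists Q : exists W, is_span Q W.
Proof.
have [s sQ Qs] := spanning_seq_exists Q.
by exists <<s>>%VS; split=> // U QU; apply/span_subvP => x /sQ /QU.
Qed.

Definition vspan Q : {vspace vT} :=
  proj1_sig (constructive_indefinite_description _ (is_span_exists Q)).

Lemma is_span_vspan Q : is_span Q (vspan Q).
Proof. exact: proj2_sig. Qed.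

Lemma memv_vspan Q v : Q v -> v \in vspan Q.
Proof. exact: (is_span_vspan Q).1. Qed.

Lemma vspan_min Q U : (forall v, Q v -> v \in U) -> (vspan Q <= U)%VS.
Proof. exact: (is_span_vspan Q).2. Qed.

Lemma is_span_ind Q W P : is_span Q W -> lin_closed P ->
  (forall v, Q v -> P v) -> forall v, v \in W -> P v.
Proof.
move=> [_ minW] linP QP; have [s sP Ps] := spanning_seq_exists P.
move=> v /(subvP (minW _ (fun v Qv => Ps v (QP v Qv)))); exact: span_ind.
Qed.

Lemma vbasis_ind P U : lin_closed P ->
  (forall x, x \in vbasis U -> P x) -> forall v, v \in U -> P v.
Proof. by move=> linP Pb v; rewrite -(span_basis (vbasisP U)); apply: span_ind. Qed.

End PredicateSpan.

Section ClosedFieldMatrices.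
Variable F : closedFieldType.

Lemma eigenvector_exp r (M : 'M[F]_r) (v : 'rV_r) z e :
  v *m M = z *: v -> v *m M ^+ e = z ^+ e *: v.
Proof.
move=> vM; elim: e => [|e IHe]; first by rewrite !expr0 mulmx1 scale1r.
by rewrite exprS -mulmxE mulmxA vM -scalemxAl IHe scalerA -exprS.
Qed.

Lemma mxtrace_nilpotent r (M : 'M[F]_r) e : M ^+ e = 0 -> \tr M = 0.
Proof.
case: r M => [|r] M Me0; first by rewrite /mxtrace big_ord0.
have [s chiM] := closed_field_poly_normal (char_poly M).
rewrite (monicP (char_poly_monic M)) scale1r in chiM.
have s0 z : z \in s -> z = 0.
  move=> zs; have : root (char_poly M) z by rewrite chiM root_prod_XsubC.
  rewrite -eigenvalue_root_char => /eigenvalueP[v vM vn0].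
  move: (eigenvector_exp e vM); rewrite Me0 mulmx0 => /esym/eqP.
  by rewrite scaler_eq0 (negbTE vn0) orbF expf_eq0 => /andP[_ /eqP].
have chiXn : char_poly M = 'X^(size s).
  rewrite chiM (eq_big_seq (fun _ => 'X)) => [|z /s0->]; last by rewrite subr0.
  by rewrite big_const_seq count_predT iter_mulr_1.
have size_s : size s = r.+1.
  by have := size_char_poly M; rewrite chiXn size_polyXn => -[].
have := char_poly_trace M (ltn0Sn r); rewrite chiXn size_s coefXn /= ltn_eqF //.
by move/esym/eqP; rewrite oppr_eq0 => /eqP.
Qed.

Lemma stable_eigenvector d (U A : 'M[F]_d) : stablemx U A -> U != 0 ->
  exists a, exists2 v : 'rV_d, v != 0 & (v <= U)%MS /\ v *m A = a *: v.
Proof.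
move=> UA Un0; set B := row_base U.
have rU : (0 < \rank U)%N by rewrite lt0n mxrank_eq0.
have /closed_rootP[a] : size (char_poly (conjmx B A)) != 1%N.
  by rewrite size_char_poly; case: (\rank U) rU.
rewrite -eigenvalue_root_char => /eigenvalueP[u uA un0].
exists a, (u *m B); first by rewrite mulmx_free_eq0 ?row_base_free.
split; first by rewrite (submx_trans (submxMl _ _)) ?eq_row_base.
have BA : (B *m A <= B)%MS by rewrite stablemx_row_base.
by rewrite -mulmxA -(mulmxKpV BA) mulmxA -/(conjmx B A) uA scalemxAl.
Qed.

Lemma common_eigenvector d (As : seq 'M[F]_d) (U : 'M[F]_d) : U != 0 ->
  (forall A, A \in As -> stablemx U A) ->
  (forall A B, A \in As -> B \in As -> U *m A *m B = U *m B *m A) ->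
  exists2 v : 'rV_d, v != 0 & (v <= U)%MS /\ forall A, A \in As -> stablemx v A.
Proof.
elim: As U => [|A As IHAs] U Un0 UAs commU.
  by exists (nz_row U); rewrite ?nz_row_eq0 ?nz_row_sub.
have [a [v vn0 [vU vA]]] := stable_eigenvector (UAs A (mem_head _ _)) Un0.
set W := (U :&: eigenspace A a)%MS.
have commW X B C : (X <= U)%MS -> B \in A :: As -> C \in A :: As ->
    X *m B *m C = X *m C *m B.
  by case/submxP=> Y -> B_AAs C_AAs; rewrite -!(mulmxA Y) commU.
have WU : (W <= U)%MS by exact: capmxSl.
have [|B BAs|B C BAs CAs|] := IHAs W.
- by apply: contraNneq vn0 => W0; rewrite -submx0 -W0 sub_capmx vU; apply/eigenspaceP.
- rewrite sub_capmx (submx_trans (submxMr _ WU)) ?UAs ?inE ?BAs ?orbT //=.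
  apply/eigenspaceP; rewrite -commW ?mem_head ?inE ?BAs ?orbT //.
  by have /eigenspaceP-> := capmxSr U (eigenspace A a); rewrite scalemxAl.
- by rewrite (commW _ W) ?inE ?BAs ?CAs ?orbT.
move=> w wn0 [wW wAs]; exists w => //; split; first exact: submx_trans wW WU.
move=> B; rewrite inE => /predU1P[->|/wAs //].
have /eigenspaceP-> := submx_trans wW (capmxSr U (eigenspace A a)).
exact: scalemx_sub.
Qed.

End ClosedFieldMatrices.

Section MatrixLieAlgebra.
Variables (F : fieldType) (d : nat).
Implicit Types (a b c : 'M[F]_d) (L M : {vspace 'M[F]_d}).

Definition mxcomm a b := a *m b - b *m a.

Definition lie_closed L := forall a b, a \in L -> b \in L -> mxcomm a b \in L.

Definition lie_derived L : {vspace 'M[F]_d} :=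
  vspan (fun c => exists a b, [/\ a \in L, b \in L & c = mxcomm a b]).

Lemma mxcommN a b : mxcomm b a = - mxcomm a b.
Proof. by rewrite /mxcomm opprB. Qed.

Lemma mxcomm0l b : mxcomm 0 b = 0.
Proof. by rewrite /mxcomm mul0mx mulmx0 subrr. Qed.

Lemma mxcommDl t a1 a2 b :
  mxcomm (t *: a1 + a2) b = t *: mxcomm a1 b + mxcomm a2 b.
Proof.
by rewrite /mxcomm mulmxDl mulmxDr -scalemxAl -scalemxAr scalerBr opprD addrACA.
Qed.

Lemma mxcomm0r a : mxcomm a 0 = 0.
Proof. by rewrite mxcommN mxcomm0l oppr0. Qed.

Lemma mxcommDr t a b1 b2 :
  mxcomm a (t *: b1 + b2) = t *: mxcomm a b1 + mxcomm a b2.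
Proof. by rewrite mxcommN mxcommDl !(mxcommN a) scalerN opprD !opprK. Qed.

Lemma mxtrace_comm a b : \tr (mxcomm a b) = 0.
Proof. by rewrite /mxcomm raddfB /= mxtrace_mulC subrr. Qed.

Lemma is_span_mxcomm (Q : 'M[F]_d -> Prop) W M :
  is_span Q W -> (forall a b, Q a -> Q b -> mxcomm a b \in M) ->
  forall a b, a \in W -> b \in W -> mxcomm a b \in M.
Proof.
move=> spanW QM.
have QbM b : Q b -> forall a, a \in W -> mxcomm a b \in M.
  move=> Qb; apply: (is_span_ind spanW (P := fun a => mxcomm a b \in M)) => [|a Qa].
    by split=> [|t x y xM yM]; rewrite ?mxcomm0l ?mem0v // mxcommDl memvD ?memvZ.
  exact: QM.
move=> a b aW; apply: (is_span_ind spanW (P := fun b => mxcomm a b \in M)) => [|b' Qb'].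
  by split=> [|t x y xM yM]; rewrite ?mxcomm0r ?mem0v // mxcommDr memvD ?memvZ.
exact: QbM.
Qed.

Lemma memv_lie_derived L a b : a \in L -> b \in L -> mxcomm a b \in lie_derived L.
Proof. by move=> aL bL; apply: memv_vspan; exists a, b. Qed.

Lemma lie_derived_min L M :
  (forall a b, a \in L -> b \in L -> mxcomm a b \in M) -> (lie_derived L <= M)%VS.
Proof. by move=> LM; apply: vspan_min => c [a [b [aL bL ->]]]; apply: LM. Qed.

Lemma lie_derived_sub L : lie_closed L -> (lie_derived L <= L)%VS.
Proof. exact: lie_derived_min. Qed.

Lemma lie_derivedS L M : (L <= M)%VS -> (lie_derived L <= lie_derived M)%VS.
Proof.
by move=> /subvP LM; apply: lie_derived_min => a b /LM aM /LM bM; apply: memv_lie_derived.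
Qed.

Lemma lie_closed_derived L : lie_closed L -> lie_closed (lie_derived L).
Proof.
move=> lieL a b /(subvP (lie_derived_sub lieL)) aL /(subvP (lie_derived_sub lieL)) bL.
exact: memv_lie_derived.
Qed.

Lemma lie_closed_iter k L : lie_closed L -> lie_closed (iter k lie_derived L).
Proof. by move=> lieL; elim: k => //= k; apply: lie_closed_derived. Qed.

Lemma iter_lie_derived_sub k L : lie_closed L -> (iter k lie_derived L <= L)%VS.
Proof.
move=> lieL; elim: k => [|k IHk] /=; first exact: subvv.
by apply: subv_trans IHk; apply: lie_derived_sub; apply: lie_closed_iter.
Qed.

End MatrixLieAlgebra.

Definition lie_solvable (F : fieldType) d (L : {vspace 'M[F]_d}) :=
  exists k, iter k (@lie_derived F d) L = 0%VS.

Section Restriction.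
Variables (F : fieldType) (m n : nat) (V : 'M[F]_(m, n)).

Lemma conjmxD f g : conjmx V (f + g) = conjmx V f + conjmx V g.
Proof. by rewrite /conjmx mulmxDr mulmxDl. Qed.

Lemma conjmxB f g : conjmx V (f - g) = conjmx V f - conjmx V g.
Proof. by rewrite /conjmx mulmxBr mulmxBl. Qed.

Lemma conjmxZ t f : conjmx V (t *: f) = t *: conjmx V f.
Proof. by rewrite /conjmx -scalemxAr -scalemxAl. Qed.

Lemma conjmx_exp f e :
  row_free V -> stablemx V f -> conjmx V (f ^+ e) = conjmx V f ^+ e.
Proof.
move=> freeV Vf; have Vfe k : stablemx V (f ^+ k).
  elim: k => [|k IHk]; first by rewrite expr0 stablemxC.
  by rewrite exprS -mulmxE stablemxM.
elim: e => [|e IHe]; first by rewrite !expr0 conjmx_scalar.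
by rewrite !exprS -!mulmxE conjmxM ?IHe ?inE.
Qed.

Lemma conjmx_comm f g : stablemx V f -> stablemx V g ->
  conjmx V (mxcomm f g) = mxcomm (conjmx V f) (conjmx V g).
Proof. by move=> Vf Vg; rewrite /mxcomm conjmxB !conjmxM. Qed.

End Restriction.

Section Krylov.
Variables (F : fieldType) (d : nat) (w : 'rV[F]_d) (a : 'M[F]_d).

Fixpoint krylov i : 'M[F]_d :=
  if i is i'.+1 then (krylov i' + <<w *m a ^+ i'>>)%MS else 0.

Lemma krylovS i : (krylov i <= krylov i.+1)%MS.
Proof. exact: addsmxSl. Qed.

Lemma krylovW i j : (i <= j)%N -> (krylov i <= krylov j)%MS.
Proof.
move=> /subnK <-; elim: (j - i)%N => [|k IHk]; first by rewrite add0n.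
exact: submx_trans IHk (krylovS _).
Qed.

Lemma krylov_exp i : (w *m a ^+ i <= krylov i.+1)%MS.
Proof. by rewrite (submx_trans _ (addsmxSr _ _)) ?genmxE. Qed.

Lemma krylovM i : (krylov i *m a <= krylov i.+1)%MS.
Proof.
elim: i => [|i IHi]; first by rewrite mul0mx sub0mx.
rewrite /= addsmxMr addsmx_sub (submx_trans IHi) ?krylovS //=.
by rewrite (eqmxMr _ (genmxE _)) -mulmxA mulmxE -exprSr krylov_exp.
Qed.

End Krylov.

Lemma horner_mx_sum (F : comNzRingType) d (A : 'M[F]_d.+1) p :
  horner_mx A p = \sum_(i < size p) p`_i *: A ^+ i.
Proof.
rewrite -{1}(coefK p) poly_def linear_sum; apply: eq_bigr => i _.
by rewrite linearZ rmorphXn /= horner_mx_X.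
Qed.

Lemma krylov_stable (F : fieldType) d (w : 'rV[F]_d) (a : 'M[F]_d) :
  (0 < d)%N -> stablemx (krylov w a d) a.
Proof.
case: d w a => // d w a _; apply: submx_trans (krylovM w a d.+1) _.
rewrite [krylov _ _ d.+2]/= addsmx_sub submx_refl genmxE.
have := Cayley_Hamilton a; rewrite horner_mx_sum size_char_poly big_ord_recr /=.
have -> : (char_poly a)`_d.+1 = 1.
  by have := monicP (char_poly_monic a); rewrite lead_coefE size_char_poly.
move/eqP; rewrite scale1r addrC addr_eq0 => /eqP->.
rewrite mulmxN eqmx_opp mulmx_sumr; apply: summx_sub => i _.
rewrite -scalemxAr scalemx_sub // (submx_trans (krylov_exp _ _ _)) //.
exact: (krylovW w a (ltn_ord i)).
Qed.

Lemma mulrn_pchar0_eq0 (F : fieldType) : [pchar F] =i pred0 ->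
  forall (x : F) r, (0 < r)%N -> x *+ r = 0 -> x = 0.
Proof.
move=> F0 x r r_gt0 /eqP; rewrite -mulr_natr mulf_eq0 (pcharf0P _).1 //.
by rewrite eqn0Ngt r_gt0 orbF => /eqP.
Qed.

(* On the Krylov space U of w under a, every k in K acts as lam k plus a
   nilpotent, so tr (k|U) = lam k * dim U; for k := [a, k'] the trace vanishes
   because U is also a-stable. *)
Section Invariance.
Variables (F : closedFieldType) (F0 : [pchar F] =i pred0).
Variables (d : nat) (K : {vspace 'M[F]_d}) (a : 'M[F]_d) (w : 'rV[F]_d).
Variable lam : 'M[F]_d -> F.
Hypotheses (wn0 : w != 0) (wK : forall k, k \in K -> w *m k = lam k *: w).
Hypothesis aK : forall k, k \in K -> mxcomm a k \in K.

Lemma krylov_weight i k : k \in K ->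
  (w *m a ^+ i *m k - lam k *: (w *m a ^+ i) <= krylov w a i)%MS.
Proof.
elim: i k => [|i IHi] k kK; first by rewrite expr0 mulmx1 wK // subrr sub0mx.
set u := w *m a ^+ i.
have -> : w *m a ^+ i.+1 *m k - lam k *: (w *m a ^+ i.+1) =
    (u *m k - lam k *: u) *m a + u *m mxcomm a k.
  rewrite exprSr -mulmxE mulmxA -/u /mxcomm mulmxBl -scalemxAl mulmxBr !mulmxA.
  by rewrite [RHS]addrC addrA subrK.
rewrite addmx_sub ?(submx_trans (submxMr _ (IHi k kK))) ?krylovM //.
rewrite -(subrK (lam (mxcomm a k) *: u) (u *m mxcomm a k)).
rewrite addmx_sub ?(submx_trans (IHi _ (aK kK))) ?krylovS //.
by rewrite scalemx_sub ?krylov_exp.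
Qed.

Lemma krylov_stable_weight i k : k \in K -> stablemx (krylov w a i) k.
Proof.
move=> kK; elim: i => [|i IHi]; first by rewrite mul0mx sub0mx.
rewrite /= addsmxMr addsmx_sub (submx_trans IHi) ?krylovS //=.
rewrite (eqmxMr _ (genmxE _)) -(subrK (lam k *: (w *m a ^+ i)) (w *m a ^+ i *m k)).
rewrite addmx_sub ?(submx_trans (krylov_weight i kK)) ?krylovS //.
by rewrite scalemx_sub ?krylov_exp.
Qed.

Lemma krylov_nilpotent i k : k \in K -> krylov w a i *m (k - (lam k)%:M) ^+ i = 0.
Proof.
move=> kK; set N := k - (lam k)%:M.
have krylovN j : (krylov w a j.+1 *m N <= krylov w a j)%MS.
  rewrite /= addsmxMr addsmx_sub (eqmxMr _ (genmxE _)) /N !mulmxBr !mul_mx_scalar.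
  by rewrite krylov_weight // andbT addmx_sub ?krylov_stable_weight // eqmx_opp scalemx_sub.
elim: i => [|i IHi]; first by rewrite mul0mx.
apply/eqP; rewrite -submx0 exprS -mulmxE mulmxA -IHi.
exact: submxMr (krylovN i).
Qed.

Let U := krylov w a d.

Lemma weight_dim_gt0 : (0 < d)%N.
Proof. by have := rank_leq_col w; rewrite rank_rV wn0. Qed.

Lemma krylov_rank_gt0 : (0 < \rank U)%N.
Proof.
have wU : (w <= U)%MS.
  apply: submx_trans (krylovW w a weight_dim_gt0).
  by have := krylov_exp w a 0; rewrite mulmx1.
by have := mxrankS wU; rewrite rank_rV wn0.
Qed.

Lemma mxtrace_restrict_krylov k : k \in K ->
  \tr (restrictmx U k) = lam k *+ \rank U.
Proof.
move=> kK; set B := row_base U; set N := k - (lam k)%:M.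
have Bk : stablemx B k by rewrite stablemx_row_base krylov_stable_weight.
have BN : stablemx B N by rewrite stablemxD ?stablemxN ?stablemxC.
have : conjmx B (N ^+ d) = 0.
  apply/eqP; rewrite -submx0 /conjmx.
  have : (B *m N ^+ d <= U *m N ^+ d)%MS by rewrite submxMr ?eq_row_base.
  rewrite krylov_nilpotent // => /(submxMr (pinvmx B)) /submx_trans; apply.
  by rewrite mul0mx sub0mx.
rewrite (conjmx_exp d (row_base_free U) BN) => /mxtrace_nilpotent /eqP.
rewrite conjmxB conjmx_scalar ?row_base_free // raddfB /= mxtrace_scalar.
by rewrite subr_eq0 => /eqP.
Qed.

Lemma invariance_lemma k : k \in K -> lam (mxcomm a k) = 0.
Proof.
move=> kK; apply: (mulrn_pchar0_eq0 F0 krylov_rank_gt0).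
rewrite -mxtrace_restrict_krylov ?aK // conjmx_comm ?mxtrace_comm //.
  by rewrite stablemx_row_base krylov_stable ?weight_dim_gt0.
by rewrite stablemx_row_base krylov_stable_weight.
Qed.

End Invariance.

Lemma rV_weight (F : fieldType) d (v : 'rV[F]_d) : v != 0 ->
  exists lam : 'M[F]_d -> F,
    (forall c, stablemx v c -> v *m c = lam c *: v) /\
    (forall t x y, lam (t *: x + y) = t * lam x + lam y).
Proof.
move=> vn0; have /existsP[j vj] : [exists j, v 0 j != 0].
  apply: contraR vn0 => /existsPn v0; apply/eqP/rowP => j.
  by rewrite mxE; have /negPn/eqP := v0 j.
exists (fun c => (v *m c) 0 j / v 0 j); split=> [c /sub_rVP[t ->]|t x y].
  by rewrite mxE mulfK.
by rewrite mulmxDr -scalemxAr !mxE mulrDl mulrA.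
Qed.

Section WeightSpace.
Variables (F : fieldType) (d : nat) (K : {vspace 'M[F]_d}) (lam : 'M[F]_d -> F).
Hypothesis lamD : forall t x y, lam (t *: x + y) = t * lam x + lam y.

Definition weight_space : 'M[F]_d :=
  (\bigcap_(i < \dim K) eigenspace (tnth (vbasis K) i) (lam (tnth (vbasis K) i)))%MS.

Lemma weight_spaceP m (X : 'M[F]_(m, d)) :
  reflect (forall c, c \in K -> X *m c = lam c *: X) (X <= weight_space)%MS.
Proof.
apply: (iffP sub_bigcapmxP) => [XK|XK i _]; last first.
  by apply/eigenspaceP/XK; rewrite vbasis_mem ?mem_tnth.
have lam0 : lam 0 = 0.
  by apply: (addrI (lam 0)); rewrite addr0 -[X in X + _]mul1r -lamD scaler0 addr0.
apply: vbasis_ind => [|_ /tnthP[i ->]]; last exact/eigenspaceP/XK.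
split=> [|t x y Xx Xy]; first by rewrite mulmx0 lam0 scale0r.
by rewrite mulmxDr -scalemxAr Xx Xy lamD scalerDl scalerA.
Qed.

End WeightSpace.

Section LieStep.
Variables (F : closedFieldType) (F0 : [pchar F] =i pred0).
Variables (d : nat) (L : {vspace 'M[F]_d}) (U : 'M[F]_d) (lam : 'M[F]_d -> F).
Hypotheses (lieL : lie_closed L) (UL : forall a, a \in L -> stablemx U a).
Hypothesis lamD : forall t x y, lam (t *: x + y) = t * lam x + lam y.

Let K := lie_derived L.
Let W := (U :&: weight_space K lam)%MS.

Variable w : 'rV[F]_d.
Hypotheses (wn0 : w != 0) (wW : (w <= W)%MS).

Let KL : (K <= L)%VS. Proof. exact: lie_derived_sub. Qed.

Lemma weight_space_stable a : a \in L -> stablemx W a.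
Proof.
move=> aL; have aK c : c \in K -> mxcomm a c \in K.
  by move=> cK; apply: memv_lie_derived => //; apply: (subvP KL).
have wK : forall c, c \in K -> w *m c = lam c *: w.
  by apply/(weight_spaceP _ lamD); apply: submx_trans wW (capmxSr _ _).
rewrite sub_capmx (submx_trans (submxMr _ (capmxSl _ _))) ?UL //=.
apply/(weight_spaceP _ lamD) => c cK.
have /(weight_spaceP _ lamD) WK := capmxSr U (weight_space K lam).
rewrite -mulmxA (_ : a *m c = c *m a + mxcomm a c); last by rewrite addrC subrK.
rewrite mulmxDr mulmxA (WK _ cK) (WK _ (aK c cK)) (invariance_lemma F0 wn0 wK aK) //.
by rewrite scale0r addr0 scalemxAl.
Qed.

Lemma weight_space_comm a b : a \in L -> b \in L -> W *m a *m b = W *m b *m a.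
Proof.
move=> aL bL; have abK : mxcomm a b \in K by exact: memv_lie_derived.
have Wab : (W <= eigenspace (mxcomm a b) (lam (mxcomm a b)))%MS.
  by apply/eigenspaceP; have /(weight_spaceP _ lamD)-> := capmxSr U (weight_space K lam).
have rWab : conjmx (row_base W) (mxcomm a b) = (lam (mxcomm a b))%:M.
  by rewrite (conjmx_eigenvalue (a := lam (mxcomm a b))) ?row_base_free ?eq_row_base.
have W_gt0 : (0 < \rank W)%N by have := mxrankS wW; rewrite rank_rV wn0.
have : lam (mxcomm a b) = 0.
  apply: (mulrn_pchar0_eq0 F0 W_gt0); rewrite -mxtrace_scalar -rWab.
  by rewrite conjmx_comm ?mxtrace_comm ?stablemx_row_base ?weight_space_stable.
move: Wab => + l0; rewrite l0 => /eigenspaceP.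
by rewrite scale0r /mxcomm mulmxBr => /eqP; rewrite subr_eq0 !mulmxA => /eqP.
Qed.

Lemma lie_step :
  exists2 v : 'rV_d, v != 0 & (v <= U)%MS /\ forall a, a \in L -> stablemx v a.
Proof.
have Wn0 : W != 0 by apply: contraNneq wn0 => W0; rewrite -submx0 -W0.
have [v vn0 [vW vL]] := common_eigenvector Wn0
  (fun a aL => weight_space_stable (vbasis_mem aL))
  (fun a b aL bL => weight_space_comm (vbasis_mem aL) (vbasis_mem bL)).
exists v => //; split; first exact: submx_trans vW (capmxSl _ _).
apply: (vbasis_ind (P := fun a => stablemx v a)) => //.
split=> [|t x y vx vy]; first exact: stablemx0.
by rewrite mulmxDr -scalemxAr addmx_sub ?scalemx_sub.
Qed.

End LieStep.

Theorem lie_theorem (F : closedFieldType) (F0 : [pchar F] =i pred0) d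
    (L : {vspace 'M[F]_d}) (U : 'M[F]_d) :
  lie_closed L -> lie_solvable L -> U != 0 -> (forall a, a \in L -> stablemx U a) ->
  exists2 v : 'rV_d, v != 0 & (v <= U)%MS /\ forall a, a \in L -> stablemx v a.
Proof.
move=> lieL [k]; elim: k L lieL => [|k IHk] L lieL Lk0 Un0 UL.
  exists (nz_row U); rewrite ?nz_row_eq0 ?nz_row_sub //; split=> // a.
  by rewrite [L]Lk0 memv0 => /eqP->; apply: stablemx0.
have KL := lie_derived_sub lieL.
have [v0 v0n0 [v0U v0K]] : exists2 v0 : 'rV_d, v0 != 0 &
    (v0 <= U)%MS /\ forall c, c \in lie_derived L -> stablemx v0 c.
  apply: IHk (lie_closed_derived lieL) _ Un0 _; first by rewrite -iterSr.
  by move=> c /(subvP KL); apply: UL.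
have [lam [v0lam lamD]] := rV_weight v0n0.
apply: (lie_step F0 lieL UL lamD v0n0).
rewrite sub_capmx v0U; apply/(weight_spaceP _ lamD) => c cK.
exact/v0lam/v0K.
Qed.

Section LieImage.
Variables (F : fieldType) (d r : nat) (phi : 'M[F]_d -> 'M[F]_r).
Variable L : {vspace 'M[F]_d}.
Implicit Type X : {vspace 'M[F]_d}.
Hypothesis phiD : forall t x y, phi (t *: x + y) = t *: phi x + phi y.
Hypothesis phiM : forall a b, a \in L -> b \in L ->
  phi (mxcomm a b) = mxcomm (phi a) (phi b).

Definition lie_image X : {vspace 'M[F]_r} :=
  vspan (fun c => exists2 a, a \in X & c = phi a).

Lemma memv_lie_image X a : a \in X -> phi a \in lie_image X.
Proof. by move=> aX; apply: memv_vspan; exists a. Qed.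

Lemma lie_image0 : lie_image 0 = 0%VS.
Proof.
apply/eqP; rewrite -subv0; apply: vspan_min => _ [a /vlineP[t ->] ->].
have phi0 : phi 0 = 0.
  by apply: (addrI (phi 0)); rewrite addr0 -[X in X + _]scale1r -phiD scaler0 addr0.
by rewrite scaler0 phi0 mem0v.
Qed.

Lemma lie_derived_image X : (X <= L)%VS ->
  (lie_derived (lie_image X) <= lie_image (lie_derived X))%VS.
Proof.
move=> /subvP XL; apply/lie_derived_min/(is_span_mxcomm (is_span_vspan _)).
move=> _ _ [a aX ->] [b bX ->]; rewrite -phiM ?XL //.
by apply/memv_lie_image/memv_lie_derived.
Qed.

Lemma lie_closed_image : lie_closed L -> lie_closed (lie_image L).
Proof.
move=> lieL; apply: (is_span_mxcomm (is_span_vspan _)) => _ _ [a aL ->] [b bL ->].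
by rewrite -phiM //; apply/memv_lie_image/lieL.
Qed.

Lemma lie_solvable_image : lie_closed L -> lie_solvable L -> lie_solvable (lie_image L).
Proof.
move=> lieL [k Lk0]; exists k; apply/eqP; rewrite -subv0 -lie_image0 -Lk0.
elim: k {Lk0} => [|k IHk] /=; first exact: subvv.
apply: subv_trans (lie_derivedS IHk) _.
by apply: lie_derived_image; apply: iter_lie_derived_sub.
Qed.

End LieImage.

Section StableFlag.
Variables (F : closedFieldType) (F0 : [pchar F] =i pred0).
Variables (d : nat) (L : {vspace 'M[F]_d}).
Hypotheses (lieL : lie_closed L) (solvL : lie_solvable L).

(* The kernel in U of a common eigenvector of the dual representation
   a |-> - (a|U)^T is a stable hyperplane of U. *)
Lemma stable_hyperplane (U : 'M[F]_d) : U != 0 -> (forall a, a \in L -> stablemx U a) ->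
  exists H : 'M[F]_d,
    [/\ (H <= U)%MS, \rank H = (\rank U).-1 & forall a, a \in L -> stablemx H a].
Proof.
move=> Un0 UL; set B := row_base U.
pose phi a : 'M[F]_(\rank U) := - (conjmx B a)^T.
have phiD t x y : phi (t *: x + y) = t *: phi x + phi y.
  by rewrite /phi conjmxD conjmxZ linearD linearZ /= opprD scalerN.
have phiM a b : a \in L -> b \in L -> phi (mxcomm a b) = mxcomm (phi a) (phi b).
  move=> aL bL; rewrite /phi conjmx_comm ?stablemx_row_base ?UL //.
  by rewrite /mxcomm linearB /= !trmx_mul !mulmxN !mulNmx !opprK opprB.
have rU0 : (1%:M : 'M[F]_(\rank U)) != 0 by rewrite -mxrank_eq0 mxrank1 mxrank_eq0.
have [x xn0 [_ xL]] := lie_theorem F0 (lie_closed_image phiM lieL)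
  (lie_solvable_image phiD phiM lieL solvL) rU0 (fun _ _ => submx1 _).
exists <<kermx x^T *m B>>%MS; rewrite ?genmxE; split.
- by rewrite (submx_trans (submxMl _ _)) ?eq_row_base.
- by rewrite mxrankMfree ?row_base_free // mxrank_ker mxrank_tr rank_rV xn0 subn1.
move=> a aL; rewrite (eqmx_stable _ (genmxE _)) -stablemx_restrict ?UL // sub_kermx.
have /sub_rVP[mu xa] := xL _ (memv_lie_image phi aL).
have xa' : restrictmx U a *m x^T = - mu *: x^T.
  have : x *m (restrictmx U a)^T = - mu *: x.
    by rewrite -[(restrictmx U a)^T]opprK mulmxN xa scaleNr.
  by move/(congr1 trmx); rewrite trmx_mul trmxK linearZ.
by rewrite -mulmxA xa' -scalemxAr mulmx_ker scaler0.
Qed.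

Definition stable_flag r (Q : nat -> 'M[F]_d) :=
  (forall i, (i <= r)%N -> \rank (Q i) = i /\ forall a, a \in L -> stablemx (Q i) a) /\
  (forall i, (i < r)%N -> (Q i <= Q i.+1)%MS).

Lemma stable_flag_exists r (U : 'M[F]_d) :
  \rank U = r -> (forall a, a \in L -> stablemx U a) ->
  exists2 Q : nat -> 'M[F]_d, Q r = U & stable_flag r Q.
Proof.
elim: r U => [|r IHr] U rU UL.
  by exists (fun _ => U); split=> // i; rewrite leqn0 => /eqP->.
have [|H [HU rH HL]] := stable_hyperplane _ UL; first by rewrite -mxrank_eq0 rU.
have [|Q QrH [Qi Q_mono]] := IHr H _ HL; first by rewrite rH rU.
exists (fun i => if i == r.+1 then U else Q i); rewrite ?eqxx //; split=> i.
  by case: eqVneq => [-> //|ne_i]; rewrite leq_eqVlt (negbTE ne_i) ltnS; apply: Qi.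
rewrite ltnS eqSS => le_ir; rewrite ltn_eqF //.
by case: eqVneq le_ir => [->|ne_i]; rewrite ?QrH // leq_eqVlt (negbTE ne_i) => /Q_mono.
Qed.

End StableFlag.

Import VectorInternalTheory.

Section Arguments.
Variables (F : fieldType) (V : vectType F) (n : nat).
Implicit Types (x : {ffun 'I_n -> V}) (i j : 'I_n).

Lemma upd_eq x i u : upd x i u i = u.
Proof. by rewrite ffunE eqxx. Qed.

Lemma upd_neq x i j u : j != i -> upd x i u j = x j.
Proof. by move=> ji; rewrite ffunE (negbTE ji). Qed.

Lemma upd_id x i : upd x i (x i) = x.
Proof. by apply/ffunP => j; rewrite ffunE; case: eqP => // ->. Qed.

Lemma upd_upd x i u v : upd (upd x i u) i v = upd x i v.
Proof. by apply/ffunP => j; rewrite !ffunE; case: eqP. Qed.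

Lemma upd_comm x i j u v : i != j -> upd (upd x i u) j v = upd (upd x j v) i u.
Proof.
move=> ij; apply/ffunP => k; rewrite !ffunE.
by case: eqVneq => [->|//]; rewrite eq_sym (negbTE ij).
Qed.

Definition swap_args x i j : {ffun 'I_n -> V} :=
  [ffun k => x (if k == i then j else if k == j then i else k)].

Lemma swap_argsE x i j k : swap_args x i j k = x (tperm i j k).
Proof.
rewrite ffunE; case: tpermP => [->|->|/eqP/negbTE-> /eqP/negbTE->] //; rewrite ?eqxx //.
by case: eqP => [->|].
Qed.

Lemma swap_args_id x i : swap_args x i i = x.
Proof. by apply/ffunP => k; rewrite swap_argsE tperm1 perm1. Qed.

End Arguments.

Section PoissonNLieTheory.
Variables (F : fieldType) (V : vectType F) (n : nat) (n_ge2 : (2 <= n)%N).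
Variables (mul : V -> V -> V) (brk : {ffun 'I_n -> V} -> V).
Hypothesis hP : poisson_nlie mul brk.
Implicit Types (x y : {ffun 'I_n -> V}) (i j : 'I_n) (p q u v : V).

Lemma pmulDl t u v w : mul (t *: u + v) w = t *: mul u w + mul v w.
Proof. by case: hP => [[]]. Qed.

Lemma pmulC u v : mul u v = mul v u.
Proof. by case: hP => [[]]. Qed.

Lemma pmulA u v w : mul u (mul v w) = mul (mul u v) w.
Proof. by case: hP => [[]]. Qed.

Lemma brkD x i t u v :
  brk (upd x i (t *: u + v)) = t *: brk (upd x i u) + brk (upd x i v).
Proof. by case: hP => _ brk_lin _ _ _; apply: brk_lin. Qed.

Lemma brk_swap x i j : i != j -> brk (swap_args x i j) = - brk x.
Proof. by case: hP => _ _ brk_skew _ _; apply: brk_skew. Qed.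

Lemma brk_fundamental x y l : val l = n.-1 ->
  brk (upd x l (brk y)) = \sum_(i < n) brk (upd y i (brk (upd x l (y i)))).
Proof. by case: hP => _ _ _ brk_fi _; apply: brk_fi. Qed.

Lemma brk_leibniz x i : val i = 0%N -> forall u v,
  brk (upd x i (mul u v)) = mul u (brk (upd x i v)) + mul v (brk (upd x i u)).
Proof. by case: hP => _ _ _ _ brk_leib; apply: brk_leib. Qed.

Lemma pmulDr t u v w : mul w (t *: u + v) = t *: mul w u + mul w v.
Proof. by rewrite pmulC pmulDl !(pmulC w). Qed.

Lemma pmul0l u : mul 0 u = 0.
Proof.
by apply: (addrI (mul 0 u)); rewrite addr0 -[X in X + _]scale1r -pmulDl scaler0 addr0.
Qed.

Lemma pmulNr u v : mul u (- v) = - mul u v.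
Proof.
apply/eqP; rewrite -subr_eq0 opprK -[mul u (- v)]scale1r -pmulDr scale1r addNr.
by rewrite pmulC pmul0l.
Qed.

Lemma brk_upd0 x i : brk (upd x i 0) = 0.
Proof.
by apply: (addrI (brk (upd x i 0))); rewrite addr0 -[X in X + _]scale1r -brkD scaler0 addr0.
Qed.

Lemma brk_eq0 x i : x i = 0 -> brk x = 0.
Proof. by move=> xi0; rewrite -(upd_id x i) xi0 brk_upd0. Qed.

Fact ilast_subproof : (n.-1 < n)%N. Proof. by rewrite ltn_predL ltnW. Qed.

Definition ilast : 'I_n := Ordinal ilast_subproof.
Definition i0 : 'I_n := Ordinal (ltnW n_ge2).
Definition i1 : 'I_n := Ordinal n_ge2.

Lemma ilast_neq_i0 : ilast != i0.
Proof. by apply/eqP => /(congr1 val) /=; case: n n_ge2 => [|[|k]]. Qed.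

Definition ad x u := brk (upd x ilast u).

Lemma adD x t u v : ad x (t *: u + v) = t *: ad x u + ad x v.
Proof. exact: brkD. Qed.

Lemma ad0 x : ad x 0 = 0.
Proof. exact: brk_upd0. Qed.

Lemma memv_brk_swap (W : {vspace V}) x i j :
  (brk (swap_args x i j) \in W) = (brk x \in W).
Proof. by have [->|ij] := eqVneq i j; rewrite ?swap_args_id ?brk_swap ?memvN. Qed.

Lemma memv_brk_slot (W : {vspace V}) : (forall y u, u \in W -> ad y u \in W) ->
  forall x i, x i \in W -> brk x \in W.
Proof.
move=> adW x i xi; rewrite -(memv_brk_swap W x i ilast).
rewrite -(upd_id (swap_args x i ilast) ilast); apply: adW.
by rewrite ffunE eqxx; case: eqP => [->|].
Qed.

Lemma ad_leibniz x u v : ad x (mul u v) = mul u (ad x v) + mul v (ad x u).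
Proof.
have swap_ad w : ad x w = - brk (upd (swap_args x i0 ilast) i0 w).
  have -> : upd (swap_args x i0 ilast) i0 w = swap_args (upd x ilast w) i0 ilast.
    apply/ffunP => k; rewrite !ffunE.
    have i0_l : i0 != ilast by rewrite eq_sym ilast_neq_i0.
    case: (eqVneq k i0) => [_|k0]; first by rewrite eqxx.
    by case: (eqVneq k ilast) => [_|kl] /=; rewrite ?(negbTE i0_l) ?(negbTE kl).
  by rewrite brk_swap ?opprK // eq_sym ilast_neq_i0.
by rewrite !swap_ad brk_leibniz // !pmulNr opprD.
Qed.

Lemma ad_fundamental x y u :
  ad x (ad y u) = ad y (ad x u) + \sum_(i < n | i != ilast) ad (upd y i (ad x (y i))) u.
Proof.
rewrite /ad (brk_fundamental x (upd y ilast u) (l := ilast) erefl) (bigD1 ilast) //=.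
rewrite upd_eq upd_upd; congr (_ + _); apply: eq_bigr => i iNl.
by rewrite upd_neq // upd_comm // eq_sym.
Qed.

Definition lmul p u := mul p u.

Lemma lmulD p t u v : lmul p (t *: u + v) = t *: lmul p u + lmul p v.
Proof. exact: pmulDr. Qed.

(* Matrices act on row vectors, so opmx f *m opmx g represents g \o f. *)
Definition opmx (f : V -> V) : 'M[F]_(dim V) := lin1_mx (v2r \o f \o r2v).

Lemma opmxE f : (forall t u v, f (t *: u + v) = t *: f u + f v) ->
  forall v, v2r v *m opmx f = v2r (f v).
Proof.
move=> fD v; have f0 : f 0 = 0.
  by apply: (addrI (f 0)); rewrite addr0 -[X in X + _]scale1r -fD scaler0 addr0.
have fZ t u : f (t *: u) = t *: f u by rewrite -[t *: u]addr0 fD f0 addr0.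
have fDD u w : f (u + w) = f u + f w by have := fD 1 u w; rewrite !scale1r.
rewrite -[in RHS](v2rK v) [in RHS](row_sum_delta (v2r v)) !linear_sum.
rewrite (big_morph f fDD f0) linear_sum.
apply/rowP => j; rewrite !mxE summxE; apply: eq_bigr => i _.
by rewrite linearZ fZ linearZ !mxE.
Qed.

Lemma ad_opmxE x v : v2r v *m opmx (ad x) = v2r (ad x v).
Proof. exact/opmxE/adD. Qed.

Lemma lmul_opmxE p v : v2r v *m opmx (lmul p) = v2r (lmul p v).
Proof. exact/opmxE/lmulD. Qed.

Lemma opmx_ext (X Y : 'M[F]_(dim V)) : (forall v, v2r v *m X = v2r v *m Y) -> X = Y.
Proof. by move=> XY; apply/row_matrixP => i; rewrite !rowE -(r2vK (delta_mx 0 i)) XY. Qed.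

Lemma mxcomm_ad_ad x y : mxcomm (opmx (ad x)) (opmx (ad y)) =
  - \sum_(i < n | i != ilast) opmx (ad (upd y i (ad x (y i)))).
Proof.
apply: opmx_ext => v; rewrite /mxcomm mulmxBr !mulmxA !ad_opmxE (ad_fundamental x y v).
rewrite linearD opprD addrA subrr add0r mulmxN mulmx_sumr linear_sum.
by congr (- _); apply: eq_bigr => i _; rewrite ad_opmxE.
Qed.

Lemma mxcomm_ad_lmul x p : mxcomm (opmx (ad x)) (opmx (lmul p)) = - opmx (lmul (ad x p)).
Proof.
apply: opmx_ext => v; rewrite /mxcomm mulmxBr !mulmxA !ad_opmxE !lmul_opmxE ad_opmxE.
by rewrite mulmxN lmul_opmxE /lmul ad_leibniz linearD opprD addrA subrr add0r pmulC.
Qed.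

Lemma mxcomm_lmul_lmul p q : mxcomm (opmx (lmul p)) (opmx (lmul q)) = 0.
Proof.
apply: opmx_ext => v; rewrite /mxcomm mulmxBr !mulmxA !lmul_opmxE.
by rewrite mulmx0 /lmul !pmulA (pmulC q p) subrr.
Qed.

Definition ad_lmul_alg : {vspace 'M[F]_(dim V)} :=
  vspan (fun T => (exists x, T = opmx (ad x)) \/ (exists p, T = opmx (lmul p))).

Lemma lie_closed_ad_lmul : lie_closed ad_lmul_alg.
Proof.
apply: (is_span_mxcomm (is_span_vspan _)) => _ _ [[x ->]|[p ->]] [[y ->]|[q ->]].
- rewrite mxcomm_ad_ad memvN; apply: memv_suml => i _.
  by apply: memv_vspan; left; eexists.
- by rewrite mxcomm_ad_lmul memvN; apply: memv_vspan; right; eexists.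
- by rewrite mxcommN mxcomm_ad_lmul opprK; apply: memv_vspan; right; eexists.
- by rewrite mxcomm_lmul_lmul mem0v.
Qed.

Section DerivedSeries.
Variable D : nat -> {vspace V}.
Hypothesis Dser : derived_series mul brk D.

Lemma memv_derived_brk k (z : {ffun 'I_n -> V}) : (0 < k)%N ->
  (forall i : 'I_n, (val i < 2)%N -> z i \in D k) -> brk z \in D k.+1.
Proof. by move=> k_gt0 zD; apply: (Dser.2 k k_gt0).1; left; exists z. Qed.

Lemma memv_derived_mul k u v : (0 < k)%N -> u \in D k -> v \in D k -> mul u v \in D k.+1.
Proof. by move=> k_gt0 uD vD; apply: (Dser.2 k k_gt0).1; right; exists u, v. Qed.

Lemma derived_series_ideal_decr k :
  (forall y u, u \in D k.+1 -> ad y u \in D k.+1) /\ (D k.+2 <= D k.+1)%VS.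
Proof.
elim: k => [|k [IHad IHsub]].
  by rewrite Dser.1; split=> [y u _|]; rewrite ?memvf ?subvf.
have adD y u : u \in D k.+2 -> ad y u \in D k.+2.
  move: u; apply: (is_span_ind (Dser.2 k.+1 isT) (P := fun u => ad y u \in D k.+2)).
    by split=> [|t u v uD vD]; rewrite ?ad0 ?mem0v // adD memvD ?memvZ.
  move=> _ [[z [zD ->]]|[u [v [uD vD ->]]]]; last first.
    by rewrite ad_leibniz memvD ?memv_derived_mul ?IHad.
  rewrite /ad (brk_fundamental _ _ (l := ilast) erefl); apply: memv_suml => t _.
  apply: memv_derived_brk => // i i_lt2; rewrite ffunE.
  by case: eqP => [e|_]; [apply/IHad/zD; rewrite -e | apply: zD].
split=> //; apply: (Dser.2 k.+2 isT).2 => _ [[z [zD ->]]|[u [v [uD vD ->]]]].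
  exact: (memv_brk_slot adD (i := i0)) (zD _ _).
by apply: memv_derived_mul; rewrite ?(subvP IHsub).
Qed.

Lemma derived_series_ad k : (0 < k)%N -> forall y u, u \in D k -> ad y u \in D k.
Proof. by case: k => // k _; apply: (derived_series_ideal_decr k).1. Qed.

Lemma derived_series_slot k : (0 < k)%N -> forall x i, x i \in D k -> brk x \in D k.
Proof. by move=> k_gt0; apply/memv_brk_slot/derived_series_ad. Qed.

Lemma derived_series_two_slots k x i j : (0 < k)%N -> i != j ->
  x i \in D k -> x j \in D k -> brk x \in D k.+1.
Proof.
move=> k_gt0 ij xi xj; set j' := tperm i i0 j.
have j'0 : j' != i0 by rewrite -(tpermL i i0) /j' (inj_eq perm_inj) eq_sym.
rewrite -(memv_brk_swap _ x i i0) -(memv_brk_swap _ _ j' i1).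
apply: memv_derived_brk => // t t_lt2; rewrite !swap_argsE.
have [->|->] : t = i0 \/ t = i1.
  by case: t t_lt2 => [[|[|t']] t_lt] //= _; [left|right]; apply: val_inj.
- by rewrite (tpermD j'0) // tpermR.
- by rewrite tpermR tpermK.
Qed.

(* The operator algebra descends two derived steps per derived step of P. *)
Definition slot_ops k : {vspace 'M[F]_(dim V)} := vspan (fun T =>
  (exists x i, [/\ i != ilast, x i \in D k & T = opmx (ad x)]) \/
  (exists2 p, p \in D k & T = opmx (lmul p))).

Definition into_ops k : {vspace 'M[F]_(dim V)} := vspan (fun T =>
  (exists2 x, (forall u, ad x u \in D k.+1) & T = opmx (ad x)) \/
  (exists2 p, p \in D k & T = opmx (lmul p))).

Lemma ad_lmul_alg_sub_slot_ops : (ad_lmul_alg <= slot_ops 1)%VS.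
Proof.
apply: vspan_min => T [[x ->]|[p ->]]; apply: memv_vspan.
  by left; exists x, i0; rewrite eq_sym ilast_neq_i0 Dser.1 memvf.
by right; exists p; rewrite ?Dser.1 ?memvf.
Qed.

Lemma lie_derived_slot_ops k : (0 < k)%N -> (lie_derived (slot_ops k) <= into_ops k)%VS.
Proof.
move=> k_gt0; apply/lie_derived_min/(is_span_mxcomm (is_span_vspan _)).
move=> _ _ [[x [i [il xi ->]]]|[p pD ->]] [[y [j [jl yj ->]]]|[q qD ->]].
- rewrite mxcomm_ad_ad memvN; apply: memv_suml => t tl; apply: memv_vspan; left.
  exists (upd y t (ad x (y t))) => // u; rewrite /ad.
  have [->|tj] := eqVneq t j.
    apply: (derived_series_slot (k := k.+1) isT (i := j)); rewrite upd_neq // upd_eq.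
    by apply: (derived_series_two_slots (i := i) (j := ilast)); rewrite ?upd_eq ?upd_neq.
  apply: (derived_series_two_slots (i := j) (j := t)) => //; first by rewrite eq_sym.
    by rewrite !upd_neq // eq_sym.
  rewrite upd_neq // upd_eq; apply: (derived_series_slot k_gt0 (i := i)).
  by rewrite upd_neq.
- rewrite mxcomm_ad_lmul memvN; apply: memv_vspan; right; exists (ad x q) => //.
  by apply: (derived_series_slot k_gt0 (i := i)); rewrite upd_neq.
- rewrite mxcommN mxcomm_ad_lmul opprK; apply: memv_vspan; right; exists (ad y p) => //.
  exact: derived_series_ad.
- by rewrite mxcomm_lmul_lmul mem0v.
Qed.

Lemma lie_derived_into_ops k : (lie_derived (into_ops k) <= slot_ops k.+1)%VS.
Proof.
apply/lie_derived_min/(is_span_mxcomm (is_span_vspan _)).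
move=> _ _ [[x xD ->]|[p pD ->]] [[y yD ->]|[q qD ->]].
- rewrite mxcomm_ad_ad memvN; apply: memv_suml => t tl; apply: memv_vspan; left.
  by exists (upd y t (ad x (y t))), t; rewrite upd_eq.
- by rewrite mxcomm_ad_lmul memvN; apply: memv_vspan; right; exists (ad x q).
- by rewrite mxcommN mxcomm_ad_lmul opprK; apply: memv_vspan; right; exists (ad y p).
- by rewrite mxcomm_lmul_lmul mem0v.
Qed.

Lemma slot_ops_eq0 s : D s = 0%VS -> slot_ops s = 0%VS.
Proof.
move=> Ds0; apply/eqP; rewrite -subv0.
apply: vspan_min => _ [[x [i [il xi ->]]]|[p pD ->]].
  rewrite memv0; apply/eqP/opmx_ext => v; rewrite ad_opmxE mulmx0 /ad.
  by rewrite (brk_eq0 (i := i)) ?linear0 // upd_neq //; apply/eqP; rewrite -memv0 -Ds0.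
rewrite memv0; apply/eqP/opmx_ext => v; rewrite lmul_opmxE mulmx0 /lmul.
by move: pD; rewrite Ds0 memv0 => /eqP->; rewrite pmul0l linear0.
Qed.

End DerivedSeries.

Lemma lie_solvable_ad_lmul : solvable_pnlie mul brk -> lie_solvable ad_lmul_alg.
Proof.
move=> [D [Dser [s [s_gt0 Ds0]]]]; exists (2 * s.-1)%N; apply/eqP; rewrite -subv0.
suff derived_slot l : (iter (2 * l) (@lie_derived _ _) ad_lmul_alg <= slot_ops D l.+1)%VS.
  by rewrite (subv_trans (derived_slot _)) // prednK // slot_ops_eq0.
elim: l => [|l IHl]; first exact: ad_lmul_alg_sub_slot_ops.
rewrite mulnS !addSn add0n /=.
apply: subv_trans (lie_derivedS (lie_derivedS IHl)) _.
apply: subv_trans (lie_derivedS (lie_derived_slot_ops Dser _)) _ => //.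
exact: lie_derived_into_ops.
Qed.

Lemma is_ideal_stable (U : 'M[F]_(dim V)) :
  (forall a, a \in ad_lmul_alg -> stablemx U a) -> is_ideal mul brk (mx2vs U).
Proof.
move=> UL; have memU u : (u \in mx2vs U) = (v2r u <= U)%MS.
  by rewrite memvE /subsetv !mx2vsK.
have UadP y u : u \in mx2vs U -> ad y u \in mx2vs U.
  rewrite !memU -ad_opmxE => uU; apply: submx_trans (submxMr _ uU) _.
  by apply: UL; apply: memv_vspan; left; exists y.
split=> [p u|x i _ u uU]; last by apply: (memv_brk_slot UadP (i := i)); rewrite upd_eq.
rewrite !memU -[mul p u]/(lmul p u) -lmul_opmxE => uU.
by apply: submx_trans (submxMr _ uU) _; apply: UL; apply: memv_vspan; right; exists p.
Qed.

End PoissonNLieTheory.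

Theorem corollary5p8 (F : closedFieldType) (hF : [pchar F] =i pred0)
  (V : vectType F) (n m : nat) (hn : (2 <= n)%N)
  (mul : V -> V -> V) (brk : {ffun 'I_n -> V} -> V)
  (hP : poisson_nlie mul brk) (hsolv : solvable_pnlie mul brk)
  (hdim : \dim (fullv : {vspace V})%VS = m) :
  exists P : nat -> {vspace V},
    [/\ P 0%N = 0%VS, P m = fullv%VS,
        forall i, (i <= m)%N -> is_ideal mul brk (P i) /\ \dim (P i) = i &
        forall i, (i < m)%N -> (P i <= P i.+1)%VS].
Proof.
rewrite dimvf in hdim; subst m.
have lieA := lie_closed_ad_lmul (n_ge2 := hn) hP.
have [Q Q1 [Qi Q_mono]] := stable_flag_exists hF lieA (lie_solvable_ad_lmul hn hP hsolv)
  (mxrank1 F (dim V)) (fun a _ => submx1 (1%:M *m a)).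
have dimQ i : (i <= dim V)%N -> \dim (mx2vs (Q i)) = i.
  by move=> le_iV; rewrite /dimv mx2vsK (Qi i le_iV).1.
exists (fun i => mx2vs (Q i)); split.
- by apply/eqP; rewrite -dimv_eq0 dimQ.
- by rewrite Q1.
- by move=> i le_iV; split; [apply/is_ideal_stable/(Qi i le_iV).2 | apply: dimQ].
- by move=> i lt_iV; rewrite /subsetv !mx2vsK Q_mono.
Qed.
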